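(* Let $\mathbb{K}\in\{\mathbb{R},\mathbb{C}\}$, let $\mathbf{R}_U\in\mathbb{K}^{n\times n}$ be self-adjoint positive definite, and let $U=\mathbb{K}^n$ carry the norm $\|\mathbf{x}\|_U:=\langle\mathbf{R}_U\mathbf{x},\mathbf{x}\rangle^{1/2}$. Let $\mathbf{u}^1,\dots,\mathbf{u}^m\in U$ and $\mathbf{U}_m:=[\mathbf{u}^1,\dots,\mathbf{u}^m]\in\mathbb{K}^{n\times m}$. Let $\mathbf{Q}\in\mathbb{K}^{s\times n}$ satisfy $\mathbf{Q}^{\mathrm{H}}\mathbf{Q}=\mathbf{R}_U$, and let $\mathbf{B}_r^*\in\mathbb{K}^{s\times m}$ be a best rank-$r$ approximation of $\mathbf{Q}\mathbf{U}_m$ with respect to the Frobenius norm $\|\cdot\|_F$. Then for any rank-$r$ matrix $\mathbf{B}_r\in\mathbb{K}^{s\times m}$, $$\frac1m\|\mathbf{Q}\mathbf{U}_m-\mathbf{B}_r^*\|_F^2\le\frac1m\sum_{i=1}^m\|\mathbf{u}^i-\mathbf{P}_{U_r}\mathbf{u}^i\|_U^2\le\frac1m\|\mathbf{Q}\mathbf{U}_m-\mathbf{B}_r\|_F^2,$$ where $U_r:=\{\mathbf{R}_U^{-1}\mathbf{Q}^{\mathrm{H}}\mathbf{b}:\mathbf{b}\in\mathrm{span}(\mathbf{B}_r)\}$ and $\mathbf{P}_{U_r}$ is the orthogonal projection onto $U_r$ with respect to $\|\cdot\|_U$.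
   Context: $\mathrm{span}(\mathbf{B}_r)$ denotes the column space of $\mathbf{B}_r$; $\mathbf{M}^{\mathrm{H}}$ is the (conjugate) transpose. *)

From HB Require Import structures.
From mathcomp Require Import all_boot all_order all_algebra.
From mathcomp Require Import complex.
Set Implicit Arguments. Unset Strict Implicit. Unset Printing Implicit Defensive.
Import Order.TTheory GRing.Theory Num.Theory.
Local Open Scope ring_scope.

(* The scalar field K is either the reals (any real closed field R, with
   trivial conjugation) or the complexes R[i] (with complex conjugation
   conjc).  The statement is written once for a generic numFieldType K
   equipped with a conjugation map [cj], and instantiated twice. *)

Section Generic.
Variables (K : numFieldType) (cj : K -> K).

Definition adjmx (p q : nat) (M : 'M[K]_(p, q)) : 'M[K]_(q, p) := map_mx cj M^T.

Definition ip (n : nat) (x y : 'cV[K]_n) : K := (adjmx y *m x) 0 0.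

Definition hpd (n : nat) (A : 'M[K]_n) : Prop :=
  adjmx A = A /\ forall x : 'cV[K]_n, x != 0 -> 0 < ip (A *m x) x.

Definition normU2 (n : nat) (RU : 'M[K]_n) (x : 'cV[K]_n) : K := ip (RU *m x) x.

Definition frob2 (p q : nat) (A : 'M[K]_(p, q)) : K :=
  \sum_(i < p) \sum_(j < q) `|A i j| ^+ 2.

Definition colspan (p q : nat) (M : 'M[K]_(p, q)) (x : 'cV[K]_p) : Prop :=
  exists c : 'cV[K]_q, x = M *m c.

Definition Ur (n s m : nat) (RU : 'M[K]_n) (Q : 'M[K]_(s, n)) (B : 'M[K]_(s, m))
  (x : 'cV[K]_n) : Prop :=
  exists b : 'cV[K]_s, colspan B b /\ x = invmx RU *m adjmx Q *m b.

Definition is_orth_projU (n : nat) (RU : 'M[K]_n) (V : 'cV[K]_n -> Prop)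
  (P : 'M[K]_n) : Prop :=
  forall x : 'cV[K]_n, V (P *m x) /\
    forall w : 'cV[K]_n, V w -> ip (RU *m (x - P *m x)) w = 0.

Definition prop2p4_stmt : Prop :=
  forall (n m s r : nat) (RU : 'M[K]_n) (Um : 'M[K]_(n, m)) (Q : 'M[K]_(s, n))
         (Bstar Br : 'M[K]_(s, m)) (P : 'M[K]_n),
    hpd RU ->
    adjmx Q *m Q = RU ->
    (\rank Bstar <= r)%N ->
    (forall B : 'M[K]_(s, m), (\rank B <= r)%N ->
        frob2 (Q *m Um - Bstar) <= frob2 (Q *m Um - B)) ->
    \rank Br = r ->
    is_orth_projU RU (Ur RU Q Br) P ->
    (m%:R)^-1 * frob2 (Q *m Um - Bstar)
      <= (m%:R)^-1 * \sum_(i < m) normU2 RU (col i Um - P *m col i Um)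
    /\ (m%:R)^-1 * \sum_(i < m) normU2 RU (col i Um - P *m col i Um)
      <= (m%:R)^-1 * frob2 (Q *m Um - Br).

End Generic.

From HB Require Import structures.
From mathcomp Require Import all_boot all_order all_algebra.
From mathcomp Require Import complex.
Set Implicit Arguments. Unset Strict Implicit. Unset Printing Implicit Defensive.
Import Order.TTheory GRing.Theory Num.Theory.
Local Open Scope ring_scope.

(* With the Gram factorisation Q^H Q = R_U, the U-norm of x is the Euclidean
   norm of Q x.  Fix x and a coefficient vector c, and let u be the element
   R_U^-1 Q^H B_r c of U_r.  Then Q x - B_r c splits as
   Q (x - P x) + Q (P x - u) + (Q u - B_r c), where the first summand is
   orthogonal to the second (P is the U-orthogonal projection and P x - u
   lies in U_r) and to the third (Q^H (Q u - B_r c) = 0).  Hence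
   ||x - P x||_U <= ||Q x - B_r c||, and taking c = e_i column by column gives
   the upper bound.  For the lower bound, Q P U_m has rank at most
   rank P <= rank B_r = r, so it competes with the best approximation B*_r. *)

Section Adjoint.
Variables (K : numFieldType) (f : {rmorphism K -> K}).
Hypothesis fK : involutive f.
Hypothesis f_mul_norm : forall a : K, f a * a = `|a| ^+ 2.

Local Notation adj := (adjmx f).
Local Notation ip := (ip f).

Lemma adjmxM p q k (A : 'M[K]_(p, q)) (B : 'M[K]_(q, k)) :
  adj (A *m B) = adj B *m adj A.
Proof. by rewrite /adjmx trmx_mul map_mxM. Qed.

Lemma adjmxD p q (A B : 'M[K]_(p, q)) : adj (A + B) = adj A + adj B.
Proof. by apply/matrixP => i j; rewrite !mxE rmorphD. Qed.

Lemma adjmx0 p q : adj (0 : 'M[K]_(p, q)) = 0.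
Proof. by apply/matrixP => i j; rewrite !mxE rmorph0. Qed.

Lemma adjmxK p q (A : 'M[K]_(p, q)) : adj (adj A) = A.
Proof. by apply/matrixP => i j; rewrite !mxE fK. Qed.

Lemma ipDl n (x1 x2 y : 'cV[K]_n) : ip (x1 + x2) y = ip x1 y + ip x2 y.
Proof. by rewrite /ip mulmxDr mxE. Qed.

Lemma ipDr n (x y1 y2 : 'cV[K]_n) : ip x (y1 + y2) = ip x y1 + ip x y2.
Proof. by rewrite /ip adjmxD mulmxDl mxE. Qed.

Lemma ip0r n (x : 'cV[K]_n) : ip x 0 = 0.
Proof. by rewrite /ip adjmx0 mul0mx mxE. Qed.

Lemma ipC n (x y : 'cV[K]_n) : ip x y = f (ip y x).
Proof. by rewrite /ip -[adj y *m x]adjmxK adjmxM adjmxK !mxE. Qed.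

Lemma ip_mulmxl p q (A : 'M[K]_(p, q)) (x : 'cV[K]_q) (y : 'cV[K]_p) :
  ip (A *m x) y = ip x (adj A *m y).
Proof. by rewrite /ip adjmxM adjmxK mulmxA. Qed.

Lemma ip_ge0 n (x : 'cV[K]_n) : 0 <= ip x x.
Proof.
rewrite /ip mxE; apply: sumr_ge0 => k _.
by rewrite !mxE f_mul_norm exprn_ge0.
Qed.

Lemma ip_pythagoras n (x y : 'cV[K]_n) :
  ip x y = 0 -> ip (x + y) (x + y) = ip x x + ip y y.
Proof.
move=> xy0; have yx0 : ip y x = 0 by rewrite ipC xy0 rmorph0.
by rewrite !ipDl !ipDr xy0 yx0 addr0 add0r.
Qed.

Lemma frob2E p q (A : 'M[K]_(p, q)) :
  frob2 A = \sum_(j < q) ip (col j A) (col j A).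
Proof.
rewrite /frob2 exchange_big; apply: eq_bigr => j _.
rewrite /ip mxE; apply: eq_bigr => i _.
by rewrite !mxE f_mul_norm.
Qed.

Lemma ip_gram s n (Q : 'M[K]_(s, n)) (x y : 'cV[K]_n) :
  ip (Q *m x) (Q *m y) = ip (adj Q *m Q *m x) y.
Proof. by rewrite -mulmxA [RHS]ip_mulmxl adjmxK. Qed.

Lemma hpd_unitmx n (RU : 'M[K]_n) : hpd f RU -> RU \in unitmx.
Proof.
case=> _ RU_pos; rewrite -unitmx_tr unitmxE unitfE.
apply/negP => /det0P [v v_neq0 vRU0].
have := RU_pos v^T; rewrite -trmx0 (inj_eq trmx_inj) v_neq0 => /(_ isT).
have -> : RU *m v^T = 0 by rewrite -[RU]trmxK -trmx_mul vRU0 trmx0.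
by rewrite /ip mulmx0 mxE ltxx.
Qed.

Lemma orth_proj_residual_le n s m (RU : 'M[K]_n) (Q : 'M[K]_(s, n))
    (B : 'M[K]_(s, m)) (P : 'M[K]_n) (x : 'cV[K]_n) (c : 'cV[K]_m) :
  RU \in unitmx -> adj Q *m Q = RU -> is_orth_projU f RU (Ur f RU Q B) P ->
  normU2 f RU (x - P *m x) <= ip (Q *m x - B *m c) (Q *m x - B *m c).
Proof.
move=> RU_unit gramQ Pproj; have [[b [[d ->] Px_eq]] Px_orth] := Pproj x.
set u := invmx RU *m adj Q *m (B *m c).
set y := x - P *m x; set w := Q *m (P *m x - u); set z := Q *m u - B *m c.
have -> : Q *m x - B *m c = Q *m y + (w + z).
  by rewrite /y /w /z !mulmxBr !addrA !subrK.
have yw0 : ip (Q *m y) w = 0.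
  rewrite ip_gram gramQ Px_orth //; exists (B *m (d - c)); split.
    by exists (d - c).
  by rewrite Px_eq /u -!mulmxBr.
have yz0 : ip (Q *m y) z = 0.
  by rewrite ip_mulmxl /z mulmxBr mulmxA gramQ /u -!mulmxA mulKVmx // subrr ip0r.
rewrite /normU2 -gramQ -ip_gram ip_pythagoras; last by rewrite ipDr yw0 yz0 addr0.
by rewrite lerDl ip_ge0.
Qed.

End Adjoint.

Lemma mxrank_le_colspan (K : numFieldType) p q k (A : 'M[K]_(p, q)) (M : 'M[K]_(p, k)) :
  (forall x, colspan M (A *m x)) -> (\rank A <= \rank M)%N.
Proof.
move=> A_colspan; rewrite -mxrank_tr -(mxrank_tr M); apply: mxrankS.
apply/row_subP => i; have [c Ae] := A_colspan (delta_mx i 0).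
by apply/submxP; exists c^T; rewrite rowE -trmx_delta -trmx_mul Ae trmx_mul.
Qed.

Lemma orth_projU_rank (K : numFieldType) (f : K -> K) n s m (RU : 'M[K]_n)
    (Q : 'M[K]_(s, n)) (B : 'M[K]_(s, m)) (P : 'M[K]_n) :
  is_orth_projU f RU (Ur f RU Q B) P -> (\rank P <= \rank B)%N.
Proof.
move=> Pproj; apply: leq_trans (mxrankM_maxr (invmx RU *m adjmx f Q) B).
apply: mxrank_le_colspan => x; have [[b [[c ->] ->]] _] := Pproj x.
by exists c; rewrite mulmxA.
Qed.

Theorem prop2p4_adjoint (K : numFieldType) (f : {rmorphism K -> K}) :
  involutive f -> (forall a : K, f a * a = `|a| ^+ 2) -> prop2p4_stmt f.
Proof.
move=> fK f_mul_norm n m s r RU Um Q Bstar Br P RU_hpd gramQ _ Bstar_best rkBr Pproj.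
have RU_unit := hpd_unitmx RU_hpd.
have m_inv_ge0 : 0 <= (m%:R : K)^-1 by rewrite invr_ge0 ler0n.
split; apply: (ler_wpM2l m_inv_ge0).
  have -> : \sum_(i < m) normU2 f RU (col i Um - P *m col i Um)
      = frob2 (Q *m Um - Q *m P *m Um).
    rewrite (frob2E f_mul_norm); apply: eq_bigr => i _.
    by rewrite /normU2 -gramQ -(ip_gram fK) !colE mulmxBl -!mulmxA -mulmxBr.
  apply: Bstar_best; rewrite -rkBr -mulmxA.
  apply: leq_trans (mxrankM_maxr _ _) _.
  exact: leq_trans (mxrankM_maxl _ _) (orth_projU_rank Pproj).
rewrite (frob2E f_mul_norm); apply: ler_sum => i _.
have := orth_proj_residual_le fK f_mul_norm (col i Um) (delta_mx i 0) RU_unit gramQ Pproj.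
by rewrite !colE mulmxBl -mulmxA; apply.
Qed.

Theorem proposition2p4 :
  (forall R : rcfType, prop2p4_stmt (K := R) id) /\
  (forall R : rcfType, prop2p4_stmt (K := R[i]) (@conjc R)).
Proof.
split=> R.
  apply: (@prop2p4_adjoint R idfun) => // a.
  by rewrite /= -expr2 -normrX ger0_norm ?sqr_ge0.
by apply: prop2p4_adjoint => [|a]; [exact: conjcK | rewrite sqr_normc mulrC].
Qed.
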